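(* Let $T$ be a tree and $S\subseteq E(T)$. Then \[ d(T\setminus S,X)=\sum_{\mu\in\mathcal{V}_1(S)} d(T\setminus V(\mu),X), \] where $\mathcal{V}_1(S)$ is the set of matchings (including the empty matching) of the subgraph of $T$ formed by the edges in $S$.
   Context: For a graph $G$ with vertex set $V$, $L(G,X_G)$ is the matrix indexed by $V$ with diagonal entries $x_u$ and off-diagonal entries $-m_{uv}$ ($m_{uv}$ the number of edges between $u$ and $v$), and $d(G,X)=\det L(G,X_G)$ (equal to $1$ for the graph with no vertices). $T\setminus S$ denotes $T$ with the edges in $S$ deleted (all vertices kept); $T\setminus V(\mu)$ denotes $T$ with the vertices covered by $\mu$ (and their incident edges) deleted. A matching is a set of pairwise vertex-disjoint edges. *)

From mathcomp Require Import all_boot all_order all_algebra.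
Set Implicit Arguments. Unset Strict Implicit. Unset Printing Implicit Defensive.
Import GRing.Theory.
Local Open Scope ring_scope.

Definition simple_graph (V : finType) (e : rel V) : Prop :=
  symmetric e /\ irreflexive e.

Definition connected_graph (V : finType) (e : rel V) : Prop :=
  forall u v : V, connect e u v.

(* A cycle: distinct vertices u :: p (at least 3), consecutive ones adjacent,
   and the last adjacent to u. *)
Definition acyclic_graph (V : finType) (e : rel V) : Prop :=
  forall (u : V) (p : seq V),
    uniq (u :: p) -> (2 <= size p)%N -> path e u p -> ~~ e (last u p) u.

Definition is_tree (V : finType) (e : rel V) : Prop :=
  [/\ simple_graph e, connected_graph e & acyclic_graph e].

Definition edge_set (V : finType) (e : rel V) : {set {set V}} :=
  [set E : {set V} | [exists u, exists v, e u v && (E == [set u; v])]].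

Definition del_edges (V : finType) (e : rel V) (S : {set {set V}}) : rel V :=
  fun u v => e u v && ([set u; v] \notin S).

Definition is_matching (V : finType) (S mu : {set {set V}}) : bool :=
  (mu \subset S) && trivIset mu.

(* L(G, X_G): diagonal x_u, off-diagonal -m_uv (m_uv in {0,1} for simple graphs). *)
Definition Lmat (R : comRingType) (V : finType) (e : rel V) (x : V -> R)
  (u v : V) : R :=
  if u == v then x u else - (e u v)%:R.

(* d(G, X) for the graph induced by e on the vertex set A:
   det of L restricted to A (equal to 1 when A is empty). *)
Definition dpoly (R : comRingType) (V : finType) (e : rel V) (x : V -> R)
  (A : {set V}) : R :=
  \det (\matrix_(i < #|A|, j < #|A|)
          Lmat e x (enum_val i) (enum_val j)).

(* Expand d as a sum over the permutations supported on the vertex set.  For an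
   edge uv of a forest G, the terms of d(G) and d(G \ uv) differ only for
   permutations sending u to v or v to u.  A permutation contributing a nonzero
   term moves every point along an edge, so in a forest it is an involution
   (a longer cycle would be a cycle of the graph); hence it swaps u and v, and
   composing with the transposition (u v) identifies these terms with
   -d(G \ {u, v}).  Thus d(G \ uv) = d(G) + d(G \ {u, v}), and deleting the
   edges of S one at a time sorts the matchings of S by whether they use uv. *)

From mathcomp Require Import all_boot all_order all_algebra all_fingroup.
Set Implicit Arguments. Unset Strict Implicit. Unset Printing Implicit Defensive.
Import GRing.Theory.
Local Open Scope ring_scope.

Lemma eq_set2 (T : finType) (a b u v : T) : u != v ->
  ([set a; b] == [set u; v]) = ((a == u) && (b == v)) || ((a == v) && (b == u)).
Proof.
move=> uv; apply/eqP/idP => [ab_uv | /orP [] /andP [/eqP -> /eqP ->] //].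
  have /set2P aP : a \in [set u; v] by rewrite -ab_uv set21.
  have /set2P bP : b \in [set u; v] by rewrite -ab_uv set22.
  have uab : u \in [set a; b] by rewrite ab_uv set21.
  have vab : v \in [set a; b] by rewrite ab_uv set22.
  case: aP bP uab vab => -> [] -> //; rewrite !eqxx ?orbT //= !inE.
    by rewrite eq_sym (negbTE uv).
  by rewrite (negbTE uv).
by rewrite setUC.
Qed.

Lemma perm_on_setD2 (T : finType) (A : {set T}) (s : {perm T}) u v :
  perm_on (A :\ u :\ v) s = [&& perm_on A s, s u == u & s v == v].
Proof.
apply/idP/and3P => [sA | [sA su sv]].
  split; first by apply: (subset_trans sA); apply/subsetP => y; rewrite !inE => /and3P [].
    by rewrite (out_perm sA) // !inE eqxx andbF.
  by rewrite (out_perm sA) // !inE eqxx.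
apply/subsetP => y sy; rewrite !inE (subsetP sA y sy) andbT.
by apply/andP; split; apply: contraTneq sy => ->; rewrite inE negbK.
Qed.

Lemma trivIset_setU1 (T : finType) (P : {set {set T}}) B : B \notin P ->
  trivIset (B |: P) = trivIset P && [disjoint B & cover P].
Proof.
move=> BP; apply/idP/andP => [tBP | [tP dBP]].
  split; first by apply: trivIsetS tBP; exact: subsetUr.
  apply/bigcup_disjoint => C CP; apply: (trivIsetP tBP); rewrite ?setU11 ?setU1r //.
  by apply: contraNneq BP => ->.
by apply: trivIsetU; rewrite ?trivIset1 ?cover1.
Qed.

Lemma sub_acyclic_graph (V : finType) (f g : rel V) :
  subrel f g -> acyclic_graph g -> acyclic_graph f.
Proof.
move=> fg gacyc u p up p2 /(sub_path fg) gp.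
by apply: contraNN (gacyc u p up p2 gp); exact: fg.
Qed.

Section PermExpansion.
Variables (R : comRingType) (V : finType).

Definition det_on (L : V -> V -> R) (A : {set V}) : R :=
  \sum_(s : {perm V} | perm_on A s) (-1) ^+ s * \prod_(y in A) L y (s y).

Section Transport.
Variables (A : {set V}) (a0 : V) (a0A : a0 \in A).
Local Notation n := #|A|.

Definition transport_fun (s : 'S_n) (y : V) : V :=
  if y \in A then enum_val (s (enum_rank_in a0A y)) else y.

Lemma transport_fun_inj s : injective (transport_fun s).
Proof.
move=> y z; rewrite /transport_fun.
case: ifP => yA; case: ifP => zA.
- by move/enum_val_inj/perm_inj/(congr1 enum_val); rewrite !enum_rankK_in.
- by move=> yz; move: zA; rewrite -yz enum_valP.
- by move=> yz; move: yA; rewrite yz enum_valP.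
- by [].
Qed.

Definition transport_perm s : {perm V} := perm (@transport_fun_inj s).

Lemma transport_permE s i : transport_perm s (enum_val i) = enum_val (s i).
Proof. by rewrite permE /transport_fun enum_valP enum_valK_in. Qed.

Lemma transport_perm_out s y : y \notin A -> transport_perm s y = y.
Proof. by rewrite permE /transport_fun => /negbTE ->. Qed.

Lemma transport_perm_on s : perm_on A (transport_perm s).
Proof.
apply/subsetP => y; rewrite inE; apply: contraR => yA.
by rewrite transport_perm_out.
Qed.

Lemma enum_val_outside_ind (P : V -> Prop) :
  (forall i : 'I_n, P (enum_val i)) -> (forall y, y \notin A -> P y) ->
  forall y, P y.
Proof.
move=> Pin Pout y; have [yA|] := boolP (y \in A); last exact: Pout.
by rewrite -(enum_rankK_in a0A yA).
Qed.

Lemma transport_perm_inj : injective transport_perm.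
Proof.
move=> s t st; apply/permP => i; apply: enum_val_inj.
by rewrite -!transport_permE st.
Qed.

Lemma transport_permM s t :
  transport_perm (s * t) = (transport_perm s * transport_perm t)%g.
Proof.
apply/permP; apply: enum_val_outside_ind => [i|y yA].
  by rewrite permM !transport_permE permM.
by rewrite permM !transport_perm_out.
Qed.

Lemma transport_perm1 : transport_perm 1 = 1%g.
Proof.
apply/permP; apply: enum_val_outside_ind => [i|y yA].
  by rewrite transport_permE !perm1.
by rewrite transport_perm_out ?perm1.
Qed.

Lemma transport_tperm i j :
  transport_perm (tperm i j) = tperm (enum_val i) (enum_val j).
Proof.
apply/permP; apply: enum_val_outside_ind => [k|y yA].
  by rewrite transport_permE; apply: inj_tperm; exact: enum_val_inj.
rewrite transport_perm_out // tpermD //.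
  by apply: contraNneq yA => <-; exact: enum_valP.
by apply: contraNneq yA => <-; exact: enum_valP.
Qed.

Lemma odd_transport_perm s : odd_perm (transport_perm s) = odd_perm s.
Proof.
have [ts -> dts] := prod_tpermP s.
have -> : transport_perm (\prod_(t <- ts) tperm t.1 t.2)%g =
   (\prod_(t <- [seq (enum_val t.1, enum_val t.2) | t <- ts]) tperm t.1 t.2)%g.
  elim: ts {dts} => [|t ts IH]; first by rewrite !big_nil transport_perm1.
  by rewrite /= !big_cons transport_permM IH transport_tperm.
rewrite !odd_perm_prod ?size_map // all_map.
by apply: sub_all dts => t; rewrite /= (inj_eq enum_val_inj).
Qed.

Lemma imset_transport_perm :
  [set transport_perm s | s : 'S_n] = [set s | perm_on A s].
Proof.
apply/eqP; rewrite eqEcard card_imset; last exact: transport_perm_inj.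
rewrite card_Sn -card_perm cardsE leqnn andbT.
by apply/subsetP => _ /imsetP [s _ ->]; rewrite inE transport_perm_on.
Qed.

End Transport.

Lemma det_on_set0 L : det_on L set0 = 1.
Proof.
rewrite /det_on (big_pred1 1%g) ?big_set0 ?odd_perm1 ?mulr1 // => s /=.
apply/idP/eqP => [s0|->]; last exact: perm_on1.
by apply: (perm_on_id s0); rewrite cards0.
Qed.

Lemma det_enum_val L (A : {set V}) :
  \det (\matrix_(i < #|A|, j < #|A|) L (enum_val i) (enum_val j)) = det_on L A.
Proof.
have [->|[a0 a0A]] := set_0Vmem A.
  rewrite det_on_set0; move: (\matrix_(i, j) _); rewrite cards0 => M.
  exact: det_mx00.
rewrite /det_on (eq_bigl (mem [set s | perm_on A s])); last by move=> s; rewrite !inE.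
rewrite -(imset_transport_perm a0A) big_imset /=; last first.
  by move=> s t _ _; exact: transport_perm_inj.
apply: eq_bigr => s _; rewrite odd_transport_perm; congr (_ * _).
by rewrite [RHS]big_enum_val; apply: eq_bigr => i _; rewrite mxE transport_permE.
Qed.

End PermExpansion.

Lemma det_on_eq_in (R : comRingType) (V : finType) (L L' : V -> V -> R)
    (A : {set V}) :
  {in A &, L =2 L'} -> det_on L A = det_on L' A.
Proof.
move=> LL'; apply: eq_bigr => s sA; congr (_ * _); apply: eq_bigr => y yA.
by rewrite LL' // (perm_closed _ sA).
Qed.

Lemma acyclic_edge_perm_involutive (V : finType) (f : rel V) (s : {perm V}) :
  acyclic_graph f -> (forall y, s y != y -> f y (s y)) -> involutive s.
Proof.
move=> facyc moves a; apply/eqP; apply: contraT => s2a.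
have s1a : s a != a by apply: contraNneq s2a => sa; rewrite !sa eqxx.
have moved i : s (iter i s a) != iter i s a.
  apply: contraNneq s1a => E; apply/eqP/(perm_inj (s := (s ^+ i)%g)).
  by rewrite !permX -iterSr iterS E.
move: (card_porbit_neq0 s a) (iter_porbit s a) (uniq_traject_porbit s a).
case: #|porbit s a| => [//|k] _ Ik Uk.
have k2 : (1 < k)%N.
  by case: k Ik {Uk} => [|[|k]] // /eqP; rewrite /= ?(negbTE s1a) ?(negbTE s2a).
have path_a : path f a (traject s (s a) k).
  apply: (@sub_in_path _ [pred y | s y != y] (frel s)); last exact: fpath_traject.
    by move=> y z sy _ /eqP <-; exact: moves.
  apply/allP => y; rewrite -[a :: _]/(traject s a k.+1).
  by move=> /trajectP [i _ ->]; exact: moved.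
have := @facyc a _ Uk; rewrite size_traject last_traject => /(_ k2 path_a).
by rewrite -[X in f _ X]Ik moves.
Qed.

Section Bridge.
Variables (R : comRingType) (V : finType) (x : V -> R).
Variables (f f' : rel V) (u v : V) (A : {set V}).
Hypotheses (fsym : symmetric f) (facyc : acyclic_graph f).
Hypotheses (uv : u != v) (fuv : f u v) (uA : u \in A) (vA : v \in A).
Hypothesis f'E : forall a b, f' a b = f a b && ([set a; b] != [set u; v]).

Lemma Lmat_del_edge a b :
  Lmat f' x a b =
  if ((a == u) && (b == v)) || ((a == v) && (b == u)) then 0 else Lmat f x a b.
Proof.
rewrite /Lmat f'E eq_set2 //; have [->|ab] := eqVneq a b.
  by case: (b =P u) => [->|]; rewrite ?(negbTE uv) ?andbF.
by case: ifP => _; rewrite /= ?andbF ?andbT ?oppr0.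
Qed.

Lemma prod_Lmat_eq0 (g : rel V) (s : {perm V}) y :
  y \in A -> s y != y -> ~~ g y (s y) -> \prod_(z in A) Lmat g x z (s z) = 0.
Proof.
move=> yA sy gy; rewrite (bigD1 y) //= /Lmat eq_sym (negbTE sy) (negbTE gy).
by rewrite oppr0 mul0r.
Qed.

Lemma prod_Lmat_del_edge (s : {perm V}) : perm_on A s ->
  \prod_(y in A) Lmat f x y (s y) - \prod_(y in A) Lmat f' x y (s y) =
  if (s u == v) && (s v == u) then \prod_(y in A) Lmat f x y (s y) else 0.
Proof.
move=> sA.
have f'uv : ~~ f' u v by rewrite f'E eqxx andbF.
have f'vu : ~~ f' v u by rewrite f'E setUC eqxx andbF.
have moved y : s y != y -> y \in A by move=> sy; apply: (subsetP sA); rewrite inE.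
have su0 : s u = v -> \prod_(y in A) Lmat f' x y (s y) = 0.
  by move=> su; apply: (prod_Lmat_eq0 uA); rewrite su // eq_sym.
have sv0 : s v = u -> \prod_(y in A) Lmat f' x y (s y) = 0.
  by move=> sv; apply: (prod_Lmat_eq0 vA); rewrite sv // eq_sym.
case: ifP => [/andP [/eqP su _]|swap]; first by rewrite su0 ?subr0.
have [touch|] := boolP ((s u == v) || (s v == u)).
  suff -> : \prod_(y in A) Lmat f x y (s y) = 0.
    by case/orP: touch => /eqP E; rewrite ?(su0 E) ?(sv0 E) subrr.
  have [/forallP along|/forallPn [y]] := boolP [forall y, (s y != y) ==> f y (s y)].
    have inv := acyclic_edge_perm_involutive facyc (fun y => implyP (along y)).
    by case/orP: touch swap => /eqP E; rewrite -E inv !eqxx ?andbT.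
  rewrite negb_imply => /andP [sy fy].
  exact: prod_Lmat_eq0 (moved y sy) sy fy.
rewrite negb_or => /andP [su sv]; apply/eqP; rewrite subr_eq0; apply/eqP.
apply: eq_bigr => y _; rewrite Lmat_del_edge.
by case: ifP => // /orP [] /andP [/eqP -> E]; [move: su | move: sv]; rewrite E.
Qed.

Lemma det_on_sub_del_edge :
  det_on (Lmat f x) A - det_on (Lmat f' x) A =
  \sum_(s : {perm V} | perm_on A s && ((s u == v) && (s v == u)))
     (-1) ^+ s * \prod_(y in A) Lmat f x y (s y).
Proof.
rewrite /det_on -sumrB big_mkcondr /=; apply: eq_bigr => s sA.
by rewrite -mulrBr prod_Lmat_del_edge //; case: ifP; rewrite ?mulr0.
Qed.

Lemma det_on_swap_edge :
  \sum_(s : {perm V} | perm_on A s && ((s u == v) && (s v == u)))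
     (-1) ^+ s * \prod_(y in A) Lmat f x y (s y) =
  - det_on (Lmat f x) (A :\ u :\ v).
Proof.
pose t := tperm u v; have tK : involutive t := tpermK u v.
have tA : perm_on A t.
  by apply: subset_trans (tperm_on u v) _; rewrite subUset !sub1set uA vA.
have perm_onMt s : perm_on A (s * t)%g = perm_on A s.
  apply/idP/idP => [stA|sA]; last exact: perm_onM.
  by rewrite -[s]mulg1 -(tperm2 u v) mulgA; apply: perm_onM.
rewrite (reindex (fun s => s * t)%g); last first.
  by exists (fun s => s * t)%g => s _; rewrite -mulgA tperm2 mulg1.
rewrite /det_on -sumrN; apply: eq_big => [s|s].
  by rewrite perm_onMt perm_on_setD2 !permM !(can2_eq tK tK) tpermL tpermR.
rewrite perm_onMt !permM !(can2_eq tK tK) tpermL tpermR.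
case/and3P=> sA /eqP su /eqP sv.
rewrite odd_permM odd_tperm uv signr_addb expr1 mulrN1 mulNr; congr (- (_ * _)).
rewrite (bigD1 u) //= (bigD1 v) /=; last by rewrite vA eq_sym uv.
rewrite !permM su sv tpermL tpermR /Lmat (negbTE uv) eq_sym (negbTE uv) fuv fsym fuv.
rewrite mulrA mulrNN !mul1r; apply: eq_big => [y|y /andP [/andP [yA yu] yv]].
  by rewrite !inE; case: (y \in A); case: (y == u); case: (y == v).
have syu : u != s y by rewrite -su (inj_eq perm_inj) eq_sym.
have syv : v != s y by rewrite -sv (inj_eq perm_inj) eq_sym.
by rewrite permM tpermD.
Qed.

Lemma det_on_del_bridge :
  det_on (Lmat f' x) A = det_on (Lmat f x) A + det_on (Lmat f x) (A :\ u :\ v).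
Proof.
have := det_on_sub_del_edge; rewrite det_on_swap_edge => E.
by rewrite -[det_on _ (A :\ u :\ v)]opprK -E opprB addrC subrK.
Qed.

End Bridge.

Section Matchings.
Variables (V : finType) (S : {set {set V}}) (u v : V) (A : {set V}).
Hypotheses (uvS : [set u; v] \in S) (uA : u \in A) (vA : v \in A).
Local Notation s := [set u; v].

Lemma matching_setU1 (mu : {set {set V}}) : s \notin mu ->
  is_matching S (s |: mu) && (cover (s |: mu) \subset A) =
  is_matching (S :\ s) mu && (cover mu \subset A :\ u :\ v).
Proof.
move=> smu; rewrite /is_matching /cover big_setU1 //= -/(cover mu).
rewrite setDDl subsetD [mu \subset _]subsetD1 smu (subUset S) sub1set uvS.
rewrite trivIset_setU1 // subUset [s \subset A]subUset !sub1set uA vA disjoint_sym.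
rewrite /= !andbT; case: (mu \subset S); case: (trivIset mu) => //=.
exact: andbC.
Qed.

Lemma sum_matchings_edge (R : nmodType) (F : {set V} -> R) :
  \sum_(mu | is_matching S mu && (cover mu \subset A)) F (A :\: cover mu) =
  \sum_(mu | is_matching (S :\ s) mu && (cover mu \subset A)) F (A :\: cover mu) +
  \sum_(mu | is_matching (S :\ s) mu && (cover mu \subset A :\ u :\ v))
     F (A :\ u :\ v :\: cover mu).
Proof.
rewrite (bigID (fun mu : {set {set V}} => s \in mu)) /= addrC; congr (_ + _).
  apply: eq_bigl => mu; rewrite /is_matching [mu \subset S :\ _]subsetD1.
  by case: (s \in mu); rewrite ?andbF ?andbT // -!andbA.
rewrite (reindex_onto (fun mu : {set {set V}} => s |: mu) (fun mu => mu :\ s)) /=;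
  last by move=> mu /andP [_ smu]; rewrite setD1K.
apply: eq_big => [mu|mu /andP [_ /eqP smu]].
  rewrite setU11 andbT; have [smu|smu] := boolP (s \in mu).
    have -> : ((s |: mu) :\ s == mu) = false.
      by apply/negbTE/eqP => E; move: smu; rewrite -E setD11.
    by rewrite andbF /is_matching [mu \subset S :\ _]subsetD1 smu /= !andbF.
  by rewrite setU1K // eqxx andbT matching_setU1.
have smu' : s \notin mu by rewrite -smu setD11.
by rewrite /cover big_setU1 //= -!setDDl.
Qed.
End Matchings.

Lemma matching_notin_outside_edge (V : finType) (mu : {set {set V}}) (u v : V)
    (A : {set V}) :
  ~~ ((u \in A) && (v \in A)) -> cover mu \subset A -> [set u; v] \notin mu.
Proof.
move=> uvA muA; apply: contra uvA => uvmu.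
by rewrite !(subsetP muA) //; apply/bigcupP; exists [set u; v]; rewrite ?set21 ?set22.
Qed.

Section DeleteEdges.
Variables (R : comRingType) (V : finType) (x : V -> R) (e : rel V).
Hypotheses (esym : symmetric e) (eirr : irreflexive e) (eacyc : acyclic_graph e).

Lemma del_edges_sym (S : {set {set V}}) : symmetric (del_edges e S).
Proof. by move=> a b; rewrite /del_edges esym setUC. Qed.

Lemma acyclic_del_edges (S : {set {set V}}) : acyclic_graph (del_edges e S).
Proof. by apply: sub_acyclic_graph eacyc => a b /andP []. Qed.

Lemma del_edgesD1 (S : {set {set V}}) E a b : E \in S ->
  del_edges e S a b = del_edges e (S :\ E) a b && ([set a; b] != E).
Proof.
move=> ES; rewrite /del_edges !inE.
by case: ([set a; b] =P E) => [->|]; rewrite ?ES ?andbF ?andbT.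
Qed.

Lemma det_on_del_edges (S : {set {set V}}) (A : {set V}) : S \subset edge_set e ->
  det_on (Lmat (del_edges e S) x) A =
  \sum_(mu | is_matching S mu && (cover mu \subset A))
     det_on (Lmat e x) (A :\: cover mu).
Proof.
have [n] := ubnP #|S|; elim: n S A => // n IH S A ltSn Se.
have [->|[E ES]] := set_0Vmem S.
  rewrite (big_pred1 set0) => [|mu]; last first.
    rewrite /is_matching subset0; apply/idP/eqP => [/andP [/andP [/eqP] //]|->].
    by rewrite eqxx /cover big_set0 sub0set andbT; apply/trivIsetP => B; rewrite inE.
  rewrite /cover big_set0 setD0; apply: det_on_eq_in => a b _ _.
  by rewrite /Lmat /del_edges inE andbT.
have := subsetP Se E ES; rewrite inE => /existsP [u /existsP [v /andP [euv /eqP uvE]]].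
subst E; set S' := S :\ [set u; v].
have ltS'n : (#|S'| < n)%N by move: ltSn; rewrite (cardsD1 [set u; v] S) ES.
have S'e : S' \subset edge_set e by apply: subset_trans Se; exact: subsetDl.
have [/andP [uA vA]|uvA] := boolP ((u \in A) && (v \in A)).
  have uv : u != v by apply: contraTneq euv => ->; rewrite eirr.
  have e'uv : del_edges e S' u v by rewrite /del_edges euv setD11.
  have bridge := det_on_del_bridge x (@del_edges_sym S') (@acyclic_del_edges S') uv e'uv.
  rewrite (bridge _ _ uA vA); last by move=> a b; exact: del_edgesD1.
  by rewrite !IH // (sum_matchings_edge ES uA vA).
rewrite (@det_on_eq_in _ _ _ (Lmat (del_edges e S') x)) => [|a b aA bA]; last first.
  have abE : [set a; b] != [set u; v].
    apply: contraNneq uvA => abE; apply/andP; split.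
      by have /set2P [->|->] : u \in [set a; b] by rewrite abE set21.
    by have /set2P [->|->] : v \in [set a; b] by rewrite abE set22.
  by rewrite /Lmat (del_edgesD1 a b ES) abE andbT.
rewrite IH //; apply: eq_bigl => mu; rewrite /is_matching [mu \subset S :\ _]subsetD1.
have [muA|] := boolP (cover mu \subset A); last by rewrite !andbF.
by rewrite (matching_notin_outside_edge uvA muA) !andbT.
Qed.

End DeleteEdges.

Unset Implicit Arguments.

Theorem lemma3p4 (R : comRingType) (V : finType) (e : rel V) (x : V -> R)
  (S : {set {set V}}) :
  is_tree e -> S \subset edge_set e ->
  dpoly (del_edges e S) x [set: V] =
  \sum_(mu : {set {set V}} | is_matching S mu) dpoly e x (~: cover mu).
Proof.
case=> [[esym eirr] _ eacyc] Se.
rewrite /dpoly det_enum_val det_on_del_edges //.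
apply: eq_big => [mu|mu _]; first by rewrite subsetT andbT.
by rewrite det_enum_val setTD.
Qed.
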